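(* Let $q\ge2$, $r\ge1$, $\rho\ge 2$ be integers, $N=r+\rho-1$, and let $\mathcal{C}$ be a $q$-ary $(n,k,r,\rho)$ LRC code with minimum distance $d$. Let $\mu=\lceil (n-(d-1))/N\rceil+1$. Then: (1) (locality-dependent Hamming bound) $$k\le \mu\Big(N-\log_q\Big(\sum_{e=0}^{\lfloor(\rho-1)/2\rfloor}\binom Ne (q-1)^e\Big)\Big);$$ (2) (locality-dependent Plotkin bound) if $\rho>\frac{q-1}{q}N$, then $$k\le \mu\log_q\frac{\rho}{\rho-\frac{q-1}{q}N};$$ (3) (locality-dependent Singleton bound) $$k\le \mu r.$$
   Context: A $q$-ary code of length $n$ is a subset $\mathcal{C}\subseteq Q^n$, $|Q|=q$; its minimum distance is the minimum Hamming distance between distinct codewords and its dimension is $k=\log_q|\mathcal{C}|$. For $I\subseteq[n]$, $\mathcal{C}_I$ is the projection of $\mathcal{C}$ onto the coordinates in $I$. $\mathcal{C}$ (of cardinality $q^k$) is an $(n,k,r,\rho)$ LRC code if every coordinate $i\in[n]$ lies in a subset $\mathcal{R}_i\subseteq[n]$ of size at most $r+\rho-1$ such that $\mathcal{C}_{\mathcal{R}_i}$ has minimum distance at least $\rho$. *)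

From mathcomp Require Import all_boot.
From Stdlib Require Import Reals.
Set Implicit Arguments. Unset Strict Implicit. Unset Printing Implicit Defensive.

Definition hdist (T : eqType) (n : nat) (x y : {ffun 'I_n -> T}) : nat :=
  #|[set i : 'I_n | x i != y i]|.

Definition proj (T : eqType) (n : nat) (I : {set 'I_n}) (x : {ffun 'I_n -> T})
  : {ffun 'I_n -> option T} :=
  [ffun i => if i \in I then Some (x i) else None].

Definition proj_code (T : finType) (n : nat) (I : {set 'I_n})
  (C : {set {ffun 'I_n -> T}}) : {set {ffun 'I_n -> option T}} :=
  [set proj I x | x in C].

Definition min_dist_ge (T : finType) (n : nat) (C : {set {ffun 'I_n -> T}})
  (rho : nat) : Prop :=
  forall x y, x \in C -> y \in C -> x != y -> rho <= hdist x y.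

Definition is_min_dist (T : finType) (n : nat) (C : {set {ffun 'I_n -> T}})
  (d : nat) : Prop :=
  min_dist_ge C d /\
  exists x y, [/\ x \in C, y \in C, x != y & hdist x y = d].

(* C is an (n,k,r,rho) LRC code (k being log_q |C|). *)
Definition is_LRC (T : finType) (n : nat) (C : {set {ffun 'I_n -> T}})
  (r rho : nat) : Prop :=
  forall i : 'I_n, exists R : {set 'I_n},
    [/\ i \in R, #|R| <= r + rho - 1 & min_dist_ge (proj_code R C) rho].

Definition logb (q x : R) : R := (ln x / ln q)%R.

Definition code_dim (T : finType) (n : nat) (C : {set {ffun 'I_n -> T}}) : R :=
  logb (INR #|T|) (INR #|C|).

From mathcomp Require Import all_boot.
From Stdlib Require Import Reals Lra Lia.
From mathcomp Require Import zify.
Set Implicit Arguments. Unset Strict Implicit. Unset Printing Implicit Defensive.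

(* Peel off one repair group at a time.  Let S be a set of codewords agreeing
   on a set F of coordinates; pick a coordinate outside F and its repair group R.
   On A = R \ F the words of S form a local code of length |A| <= N and minimum
   distance >= rho.  If L is the Hamming, Plotkin or Singleton bound on the
   dimension of such a code of length N, then L |A| / N bounds it at length |A|
   (the bounds are concave in the length).  Keeping a largest fibre of the
   projection onto A loses at most that much and enlarges F by |A|.  Once
   |F| > n - d the fibre is a single codeword, whence
   log_q |C| <= L (n - d + N) / N <= mu L. *)

Lemma card_sub_sum (T : finType) (X : {pred T}) (P : pred T) :
  #|[set y in X | P y]| = \sum_(y in X) P y.
Proof.
rewrite -sum1_card big_mkcond [RHS]big_mkcond; apply: eq_bigr => y _.
by rewrite inE; case: (y \in X); case: (P y).
Qed.

Lemma exists_subset_card (T : finType) (A : {set T}) k :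
  k <= #|A| -> exists2 B : {set T}, B \subset A & #|B| = k.
Proof.
move=> kA; have : 0 < #|[set B : {set T} | B \subset A & #|B| == k]|.
  by rewrite cards_draws bin_gt0.
by case/card_gt0P => B; rewrite inE => /andP [BA /eqP Bk]; exists B.
Qed.

Lemma card_le_image_mul_fibre (T U : finType) (f : T -> U) (S : {set T}) : 0 < #|S| ->
  exists2 p, p \in f @: S & #|S| <= #|f @: S| * #|[set x in S | f x == p]|.
Proof.
case/card_gt0P => x0 x0S; pose fibre p := #|[set x in S | f x == p]|.
have [p pS pmax] := @arg_maxnP _ (f x0) (mem (f @: S)) fibre (imset_f f x0S).
exists p => //; rewrite -sum1_card (partition_big f (mem (f @: S))) => [|x xS]; last first.
  exact: imset_f.
rewrite -sum_nat_const; apply: leq_sum => u uS; apply: leq_trans (pmax u uS).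
by rewrite sum1_card; apply: subset_leq_card; apply/subsetP => x; rewrite !inE.
Qed.

Lemma cauchy_schwarz_nat (T : finType) (f : T -> nat) :
  (\sum_i f i) * (\sum_i f i) <= #|T| * \sum_i f i * f i.
Proof.
rewrite -(leq_pmul2l (isT : 0 < 2)).
have -> : 2 * (#|T| * \sum_i f i * f i) = \sum_i \sum_j (f i * f i + f j * f j).
  rewrite [RHS](eq_bigr (fun i => #|T| * (f i * f i) + \sum_j f j * f j)); last first.
    by move=> i _; rewrite big_split /= sum_nat_const.
  by rewrite big_split /= sum_nat_const -big_distrr /= mul2n -addnn.
rewrite mulnCA big_distrl /=; apply: leq_sum => i _.
rewrite !big_distrr /=; apply: leq_sum => j _.
have := (nat_Cauchy (f i) (f j)).1; rewrite -!mulnn; lia.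
Qed.

(* Volume of a Hamming ball of radius [s - 1] over an alphabet of size [w + 1]. *)
Definition ball_vol (w s m : nat) := \sum_(i < s) 'C(m, i) * expn w i.

Lemma ball_vol0 w s : ball_vol w s.+1 0 = 1.
Proof. by rewrite /ball_vol big_ord_recl big1 // => i _; rewrite bin0n. Qed.

Lemma ball_vol_gt0 w s m : 0 < ball_vol w s.+1 m.
Proof. by rewrite /ball_vol big_ord_recl bin0 expn0. Qed.

Lemma ball_volS w s m : ball_vol w s.+1 m.+1 = ball_vol w s.+1 m + w * ball_vol w s m.
Proof.
rewrite /ball_vol !big_ord_recl /= !bin0 -addnA big_distrr -big_split /=; congr (_ + _).
by apply: eq_bigr => i _; rewrite /bump /= add1n binS expnS; lia.
Qed.

(* [C(m + 1, i) / C(m, i) = (m + 1) / (m + 1 - i)] increases with [i]. *)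
Lemma bin_ratio_le m s i : i < s -> 'C(m, s) * 'C(m.+1, i) <= 'C(m.+1, s) * 'C(m, i).
Proof.
move=> lt_is; have [le_sm|lt_ms] := leqP s m; last by rewrite bin_small.
have := mul_bin_down m.+1 i; have := mul_bin_down m.+1 s; rewrite /= => hs hi.
rewrite -(leq_pmul2l (_ : 0 < m.+1 * (m.+1 - i))); last by rewrite muln_gt0 /=; lia.
rewrite mulnACA hs -hi.
apply: leq_trans (leq_mul (leq_mul (_ : m.+1 - s <= m.+1 - i) (leqnn _)) (leqnn _)) _.
  by apply: leq_sub2l; apply: ltnW.
by rewrite mulnACA (mulnC (m.+1 - i)).
Qed.

Lemma ball_vol_logconcave w s m :
  ball_vol w s.+1 m * ball_vol w s.+1 m.+2 <= ball_vol w s.+1 m.+1 * ball_vol w s.+1 m.+1.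
Proof.
have key : 'C(m, s) * expn w s * ball_vol w s m.+1 <= 'C(m.+1, s) * expn w s * ball_vol w s m.
  rewrite /ball_vol !big_distrr /=; apply: leq_sum => i _.
  by rewrite mulnACA [leqRHS]mulnACA leq_mul // bin_ratio_le.
have top m' : ball_vol w s.+1 m' = ball_vol w s m' + 'C(m', s) * expn w s.
  by rewrite /ball_vol big_ord_recr.
(* Pascal's rule [ball_volS] reduces the claim to [key]. *)
rewrite ball_volS {3}ball_volS !mulnDr (mulnC (ball_vol w s.+1 m)) leq_add2l.
rewrite (top m) (top m.+1) !mulnA !(mulnC _ w) -!mulnA leq_mul2l.
by apply/orP; right; move: key; rewrite !(mulnC _ (expn w s)); nia.
Qed.

Section Words.
Variables (Q : finType) (n : nat).
Implicit Types (A B F R : {set 'I_n}) (c x y z : {ffun 'I_n -> Q})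
  (C D S : {set {ffun 'I_n -> Q}}).

Definition diff_on A x y := [set j in A | x j != y j].

Definition dist_on A x y := #|diff_on A x y|.

Definition min_dist_on A D rho :=
  forall x y, x \in D -> y \in D -> x != y -> rho <= dist_on A x y.

Definition cylinder A c := [set y : {ffun 'I_n -> Q} | [forall j, (j \notin A) ==> (y j == c j)]].

Definition splice A x c : {ffun 'I_n -> Q} := [ffun j => if j \in A then x j else c j].

Definition agree_on F S := {in S &, forall x y, {in F, x =1 y}}.

Lemma dist_onC A x y : dist_on A x y = dist_on A y x.
Proof. by apply: eq_card => j; rewrite !inE eq_sym. Qed.

Lemma dist_on_triangle A x y z : dist_on A x z <= dist_on A x y + dist_on A y z.
Proof.
apply: leq_trans (leq_card_setU _ _); apply: subset_leq_card.
apply/subsetP => j; rewrite !inE => /andP [-> xz] /=.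
by case: eqP => //= xy; rewrite xy in xz.
Qed.

Lemma splice_in_cylinder A x c : splice A x c \in cylinder A c.
Proof.
by rewrite inE; apply/forallP => j; apply/implyP => /negbTE jA; rewrite ffunE jA.
Qed.

Lemma dist_on_splice A x y c : dist_on A (splice A x c) (splice A y c) = dist_on A x y.
Proof. by apply: eq_card => j; rewrite !inE !ffunE; case: (j \in A). Qed.

Lemma card_pointwise (P : 'I_n -> pred Q) :
  #|[set y : {ffun 'I_n -> Q} | [forall j, y j \in P j]]| = \prod_j #|P j|.
Proof.
have := card_family P; rewrite foldrE big_map big_enum => <-.
by apply: eq_card => y; rewrite inE; apply/forallP/familyP.
Qed.

Lemma card_cylinder A c : #|cylinder A c| = expn #|Q| #|A|.
Proof.
pose P j := if j \in A then predT else pred1 (c j).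
rewrite (_ : cylinder A c = [set y : {ffun 'I_n -> Q} | [forall j, y j \in P j]]); last first.
  by apply/setP => y; rewrite !inE; apply: eq_forallb => j; rewrite /P; case: (j \in A).
rewrite card_pointwise (bigID (mem A)) /= [X in _ * X]big1 => [|j /negbTE jA]; last first.
  by rewrite /P jA card1.
by rewrite muln1 -prod_nat_const; apply: eq_bigr => j jA; rewrite /P jA cardT.
Qed.

Lemma dist_on_sum A x y : dist_on A x y = \sum_(j in A) (x j != y j).
Proof. by rewrite /dist_on /diff_on card_sub_sum. Qed.

Lemma hdist_proj R x y : hdist (proj R x) (proj R y) = dist_on R x y.
Proof. by apply: eq_card => j; rewrite !inE !ffunE; case: (j \in R). Qed.

Lemma dist_on_agree R F x y : {in F, x =1 y} -> dist_on (R :\: F) x y = dist_on R x y.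
Proof.
move=> xy; apply: eq_card => j; rewrite !inE.
by case: (boolP (j \in F)) => //= jF; rewrite xy // eqxx andbF.
Qed.

Lemma agree_on_fibre F S A c p :
  agree_on F S -> agree_on (F :|: A) [set x in S | splice A x c == p].
Proof.
move=> SF x y /[!inE] /andP [xS /eqP px] /andP [yS /eqP py] j /setUP [jF|jA].
  exact: SF.
by have := congr1 (fun f : {ffun 'I_n -> Q} => f j) (etrans px (esym py)); rewrite !ffunE jA.
Qed.

Lemma is_min_dist_range C d :
  is_min_dist C d -> [/\ 0 < d, d <= n & 0 < #|C|].
Proof.
case=> _ [x [y [xC _ xy <-]]]; split; last by apply/card_gt0P; exists x.
  rewrite card_gt0; apply: contra_neq xy => /setP xy0; apply/ffunP => j.
  by apply/eqP; have := xy0 j; rewrite !inE => /negbFE.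
by apply: leq_trans (max_card _) _; rewrite card_ord.
Qed.

Lemma card_le1_agree C S F d : min_dist_ge C d -> S \subset C -> agree_on F S ->
  n - d < #|F| -> #|S| <= 1.
Proof.
move=> Cd SC SF Fd; apply/card_le1_eqP => x y xS yS; apply/eqP.
apply: contraTT (_ : hdist y x < d) => [/(Cd _ _ (subsetP SC _ yS) (subsetP SC _ xS))|].
  by rewrite -leqNgt.
apply: leq_ltn_trans (_ : #|~: F| < d); last by have := cardsC F; rewrite card_ord; lia.
apply: subset_leq_card; apply/subsetP => j; rewrite !inE.
by apply: contra => jF; rewrite (SF y x yS xS j jF).
Qed.

Lemma splice_min_dist C S F R c rho : S \subset C -> agree_on F S ->
  min_dist_ge (proj_code R C) rho ->
  min_dist_on (R :\: F) [set splice (R :\: F) x c | x in S] rho.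
Proof.
move=> SC SF Rdist _ _ /imsetP [x xS ->] /imsetP [y yS ->] xy.
rewrite dist_on_splice dist_on_agree; last exact: SF.
rewrite -hdist_proj; apply: Rdist; [exact/imset_f/(subsetP SC) ..|].
apply: contra_neq xy => /ffunP pxy; apply/ffunP => j; rewrite !ffunE.
by case: ifP => // /setDP [jR _]; have := pxy j; rewrite !ffunE jR => -[].
Qed.

Lemma singleton_bound A c D rho :
  0 < rho -> D \subset cylinder A c -> min_dist_on A D rho ->
  #|D| <= expn #|Q| (#|A| + 1 - rho).
Proof.
move=> rho0 DA Drho; have A_ge : #|A| + 1 - rho <= #|A| by lia.
have [B BA cardB] := exists_subset_card A_ge.
have inj : {in D &, injective (splice B ^~ c)}.
  move=> x y xD yD /ffunP xy; apply/eqP.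
  apply: contraTT (_ : dist_on A x y < rho) => [/(Drho _ _ xD yD)|]; first by rewrite -leqNgt.
  apply: leq_ltn_trans (_ : #|A :\: B| < rho).
    apply: subset_leq_card; apply/subsetP => j; rewrite !inE => /andP [jA].
    by rewrite jA andbT; apply: contra => jB; have := xy j; rewrite !ffunE jB => /eqP.
  by rewrite cardsD (setIidPr BA) cardB; lia.
rewrite -(card_in_imset inj) -cardB -(card_cylinder B c); apply: subset_leq_card.
by apply/subsetP => _ /imsetP [x _ ->]; apply: splice_in_cylinder.
Qed.

Lemma card_shell A B c x : x \in cylinder A c -> B \subset A ->
  #|[set y in cylinder A c | diff_on A x y == B]| = expn (#|Q| - 1) #|B|.
Proof.
move=> /[!inE] /forallP xA BA.
pose P j := if j \in B then predC1 (x j) else pred1 (x j).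
rewrite (_ : [set y in _ | _] = [set y : {ffun 'I_n -> Q} | [forall j, y j \in P j]]).
  rewrite card_pointwise (bigID (mem B)) /= [X in _ * X]big1 => [|j /negbTE jB]; last first.
    by rewrite /P jB card1.
  by rewrite muln1 -prod_nat_const; apply: eq_bigr => j jB; rewrite /P jB cardC1 subn1.
apply/setP => y; rewrite !inE; apply/andP/forallP => [[/forallP yA /eqP DB] j|yP].
  rewrite /P -DB !inE; case: (boolP (j \in A)) => jA /=.
    by case: (x j =P y j) => [->|/eqP xy] /=; rewrite !inE ?eqxx // eq_sym.
  by have := xA j; have := yA j; rewrite jA => /eqP -> /eqP ->; rewrite inE.
have yx j : j \notin B -> y j = x j by have := yP j; rewrite /P; case: (j \in B) => //= /eqP.
split.
  apply/forallP => j; apply/implyP => jA; rewrite yx ?(implyP (xA j)) //.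
  by apply: contra jA; apply: (subsetP BA).
apply/eqP/setP => j; rewrite !inE; case: (boolP (j \in B)) => jB.
  by have := yP j; rewrite /P jB inE eq_sym (subsetP BA).
by rewrite yx // eqxx andbF.
Qed.

Lemma card_ball A c x e : x \in cylinder A c ->
  #|[set y in cylinder A c | dist_on A x y <= e]| = ball_vol (#|Q| - 1) e.+1 #|A|.
Proof.
move=> xA; rewrite -sum1_card.
rewrite (partition_big (diff_on A x) (fun B => (B \subset A) && (#|B| <= e))) /=; last first.
  by move=> y /[!inE] /andP [_ ->]; rewrite andbT; apply/subsetP => j /[!inE] /andP [].
rewrite (eq_bigr (fun B => expn (#|Q| - 1) #|B|)); last first.
  move=> B /andP [BA Be]; rewrite -(card_shell xA BA) sum1_card; apply: eq_card => y.
  rewrite unfold_in /= !inE /dist_on; case: eqP => [->|]; rewrite ?Be ?andbT ?andbF //.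
rewrite (partition_big (fun B : {set 'I_n} => (inord #|B| : 'I_e.+1)) predT) //=.
apply: eq_bigr => i _; rewrite (eq_bigl (fun B => (B \subset A) && (#|B| == i))); last first.
  move=> B; apply/andP/andP => [[/andP [BA Be] /eqP <-]|[BA /eqP Bi]].
    by rewrite inordK.
  have Be : #|B| < e.+1 by rewrite Bi ltn_ord.
  by rewrite BA -ltnS Be; split => //; apply/eqP/val_inj; rewrite /= inordK.
rewrite (eq_bigr (fun _ => expn (#|Q| - 1) i)) => [|B /andP [_ /eqP ->] //].
by rewrite sum_nat_const -cards_draws; congr (_ * _); apply: eq_card => B; rewrite inE.
Qed.

Lemma hamming_bound A c D rho e :
  e + e < rho -> D \subset cylinder A c -> min_dist_on A D rho ->
  #|D| * ball_vol (#|Q| - 1) e.+1 #|A| <= expn #|Q| #|A|.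
Proof.
move=> erho DA Drho; pose ball x := [set y in cylinder A c | dist_on A x y <= e].
rewrite -sum_nat_const (eq_bigr (fun x => #|ball x|)); last first.
  by move=> x xD; rewrite card_ball // (subsetP DA).
rewrite (eq_bigr _ (fun x _ => card_sub_sum _ _)) exchange_big /= -(card_cylinder A c).
rewrite -sum1_card; apply: leq_sum => y _; rewrite -card_sub_sum.
apply/card_le1_eqP => x1 x2 /[!inE] /andP [x1D x1y] /andP [x2D x2y].
apply/eqP; apply: contraTT (_ : dist_on A x2 x1 < rho) => [/(Drho _ _ x2D x1D)|].
  by rewrite -leqNgt.
have := dist_on_triangle A x2 y x1; rewrite (dist_onC A y x1); lia.
Qed.

Lemma coordinate_disagreements_le D j :
  #|Q| * \sum_(x in D) \sum_(y in D) (x j != y j) <= (#|Q| - 1) * (#|D| * #|D|).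
Proof.
pose m v := #|[set x in D | x j == v]|.
have cardD : #|D| = \sum_v m v.
  rewrite -sum1_card (partition_big (fun x : {ffun 'I_n -> Q} => x j) predT) //=.
  by apply: eq_bigr => v _; rewrite sum1_card; apply: eq_card => x; rewrite !inE.
have equal_pairs : \sum_(x in D) \sum_(y in D) (x j == y j) = \sum_v m v * m v.
  rewrite (eq_bigr (fun x => m (x j))); last first.
    by move=> x _; rewrite /m card_sub_sum; apply: eq_bigr => y _; rewrite eq_sym.
  rewrite (partition_big (fun x : {ffun 'I_n -> Q} => x j) predT) //=.
  apply: eq_bigr => v _; rewrite (eq_bigr (fun _ => m v)) => [|x /andP [_ /eqP ->] //].
  by rewrite sum_nat_const; congr (_ * _); apply: eq_card => x; rewrite !inE.
have all_pairs : \sum_(x in D) \sum_(y in D) (x j != y j)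
           + \sum_(x in D) \sum_(y in D) (x j == y j) = #|D| * #|D|.
  rewrite -big_split -sum_nat_const; apply: eq_bigr => x _.
  by rewrite -big_split -sum1_card; apply: eq_bigr => y _; case: (x j == y j).
have := cauchy_schwarz_nat m; rewrite -cardD -equal_pairs -all_pairs.
move: (\sum_(x in D) _ _) (\sum_(x in D) _ _) => u v; nia.
Qed.

Lemma plotkin_bound A D rho : min_dist_on A D rho ->
  #|Q| * ((#|D| - 1) * rho) <= #|A| * (#|Q| - 1) * #|D|.
Proof.
move=> Drho; pose S := \sum_(x in D) \sum_(y in D) dist_on A x y.
have lower : #|D| * ((#|D| - 1) * rho) <= S.
  rewrite -sum_nat_const; apply: leq_sum => x xD; rewrite (bigD1 x xD) /=.
  rewrite (cardsD1 x D) xD addKn -sum_nat_const; apply: leq_trans (leq_addl _ _).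
  rewrite [leqRHS](eq_bigl (mem (D :\ x))) => [|y]; last by rewrite !inE andbC.
  by apply: leq_sum => y /setD1P [yx yD]; apply: Drho; rewrite // eq_sym.
have upper : #|Q| * S <= #|A| * ((#|Q| - 1) * (#|D| * #|D|)).
  rewrite /S (eq_bigr _ (fun x _ => eq_bigr _ (fun y _ => dist_on_sum A x y))).
  rewrite (eq_bigr _ (fun x _ => exchange_big _ _ _ _ _ _)) exchange_big /=.
  rewrite big_distrr /= -sum_nat_const; apply: leq_sum => j _.
  exact: coordinate_disagreements_le.
case: #|D| lower upper => [|m] lower upper; first by rewrite !muln0.
rewrite -(leq_pmul2l (ltn0Sn m)); have := leq_mul (leqnn #|Q|) lower.
move: upper; move: (#|Q| * S) (#|Q| - 1) => s q'; nia.
Qed.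

End Words.

Section Logarithm.
Local Open Scope R_scope.
Variable b : R.
Hypothesis b_gt1 : 1 < b.

Lemma ln_base_gt0 : 0 < ln b.
Proof. by rewrite -ln_1; apply: ln_increasing; lra. Qed.

Lemma logb_le x y : 0 < x -> x <= y -> logb b x <= logb b y.
Proof.
move=> x_gt0 [xy|<-]; last exact: Rle_refl.
apply: Rmult_le_compat_r; first exact/Rlt_le/Rinv_0_lt_compat/ln_base_gt0.
exact/Rlt_le/ln_increasing.
Qed.

Lemma logb_mul x y : 0 < x -> 0 < y -> logb b (x * y) = logb b x + logb b y.
Proof. by move=> x0 y0; rewrite /logb ln_mult //; lra. Qed.

Lemma logb_div x y : 0 < x -> 0 < y -> logb b (x / y) = logb b x - logb b y.
Proof.
by move=> x0 y0; rewrite /logb /Rdiv ln_mult ?ln_Rinv //; [lra | apply: Rinv_0_lt_compat].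
Qed.

Lemma logb1 : logb b 1 = 0.
Proof. by rewrite /logb ln_1 /Rdiv Rmult_0_l. Qed.

Lemma logb_pow_base k : logb b (b ^ k) = INR k.
Proof. rewrite /logb ln_pow; last lra. by field; apply/Rgt_not_eq/ln_base_gt0. Qed.

Lemma concave_chord (g : nat -> R) (N a : nat) : g 0%nat = 0 ->
  (forall i, (i.+2 <= N)%nat -> g i + g i.+2 <= 2 * g i.+1) ->
  (a <= N)%nat -> INR a * g N <= INR N * g a.
Proof.
move=> g0 g_concave.
have ratio m : (m.+1 <= N)%nat -> INR m * g m.+1 <= INR m.+1 * g m.
  elim: m => [|m IH] mN; first by rewrite g0 /=; lra.
  have := IH (ltnW mN); have := g_concave m mN; have := pos_INR m; rewrite !S_INR; nra.
have chord k : (a + k <= N)%nat -> INR a * g (a + k)%nat <= INR (a + k) * g a.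
  elim: k => [|k IH] akN; first by rewrite addn0; lra.
  have [->|a_gt0] := posnP a; first by rewrite g0 /=; lra.
  rewrite addnS in akN *; have := IH (ltnW akN); have := ratio _ akN; rewrite S_INR.
  have : 0 < INR (a + k) by apply: lt_0_INR; apply/ltP; lia.
  have := pos_INR a; nra.
by move=> aN; rewrite -(subnKC aN); apply: chord; rewrite subnKC.
Qed.

Lemma logb_chord (f : nat -> R) (N a : nat) :
  (forall i, (i <= N)%nat -> 0 < f i) ->
  (forall i, (i.+2 <= N)%nat -> f i * f i.+2 <= f i.+1 * f i.+1) ->
  (a <= N)%nat ->
  INR a * (logb b (f N) - logb b (f 0%nat)) <= INR N * (logb b (f a) - logb b (f 0%nat)).
Proof.
move=> f_gt0 f_logconcave.
apply: (concave_chord (g := fun i => logb b (f i) - logb b (f 0%nat))).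
  by rewrite Rminus_diag.
move=> i iN; have f0 j : (j <= i.+2)%nat -> 0 < f j.
  by move=> ji; apply: f_gt0; apply: leq_trans iN.
have f_i := f0 i (leqW (leqnSn i)); have f_i1 := f0 i.+1 (leqnSn _).
have f_i2 := f0 i.+2 (leqnn _).
have := logb_le (Rmult_lt_0_compat _ _ f_i f_i2) (f_logconcave _ iN).
rewrite !logb_mul //; lra.
Qed.

End Logarithm.

Lemma INR_expn m k : INR (expn m k) = (INR m ^ k)%R.
Proof. by elim: k => // k IH; rewrite expnS mult_INR IH. Qed.

Lemma INR_leq m p : m <= p -> (INR m <= INR p)%R.
Proof. by move/leP; apply: le_INR. Qed.

Lemma INR_gt0 m : 0 < m -> (0 < INR m)%R.
Proof. by move/ltP; apply: lt_0_INR. Qed.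

Lemma INR_gt1 m : 1 < m -> (1 < INR m)%R.
Proof. by move/ltP; apply: lt_1_INR. Qed.

Lemma le_scaled_bound (x h a hN N : R) :
  (0 < N)%R -> (x <= h)%R -> (N * h <= a * hN)%R -> (x <= hN / N * a)%R.
Proof.
move=> N_gt0 xh hN_ge; apply: (Rmult_le_reg_l N) => //.
rewrite (_ : N * (hN / N * a) = a * hN)%R; first nra.
by field; apply: Rgt_not_eq.
Qed.

(* Local codes on [A] are represented inside the cylinder of words equal to [c] off [A]. *)
Definition local_bound (Q : finType) (n N rho : nat) (L : R) : Prop :=
  forall (A : {set 'I_n}) (c : {ffun 'I_n -> Q}) (D : {set {ffun 'I_n -> Q}}),
    #|A| <= N -> 0 < #|D| -> D \subset cylinder A c -> min_dist_on A D rho ->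
    (logb (INR #|Q|) (INR #|D|) <= L / INR N * INR #|A|)%R.

Section LocalBounds.
Variables (Q : finType) (n r rho : nat).
Hypothesis Q_gt1 : 1 < #|Q|.
Local Notation N := (r + rho - 1).
Local Notation q := (INR #|Q|).

Let q_gt1 : (1 < q)%R := INR_gt1 Q_gt1.

Lemma singleton_local_bound : 0 < r -> 0 < rho -> local_bound Q n N rho (INR r).
Proof.
move=> r_gt0 rho_gt0 A c D AN D_gt0 DA Drho.
have := logb_le q_gt1 (INR_gt0 D_gt0) (INR_leq (singleton_bound rho_gt0 DA Drho)).
rewrite INR_expn logb_pow_base // => bound.
apply: le_scaled_bound bound _; first by apply: INR_gt0; lia.
rewrite -!mult_INR; apply: INR_leq.
have [small|large] := leqP (#|A| + 1) rho; first by rewrite (_ : _ - rho = 0) //; lia.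
nia.
Qed.

Lemma hamming_local_bound e : e + e < rho -> 0 < N ->
  local_bound Q n N rho (INR N - logb q (INR (ball_vol (#|Q| - 1) e.+1 N))).
Proof.
move=> erho N_gt0 A c D AN D_gt0 DA Drho.
pose V m := INR (ball_vol (#|Q| - 1) e.+1 m).
have V_gt0 m : (0 < V m)%R by apply/INR_gt0/ball_vol_gt0.
have bound : (logb q (INR #|D|) <= INR #|A| - logb q (V #|A|))%R.
  have DV_gt0 := Rmult_lt_0_compat _ _ (INR_gt0 D_gt0) (V_gt0 #|A|).
  have := INR_leq (hamming_bound erho DA Drho); rewrite mult_INR => /(logb_le q_gt1 DV_gt0).
  by rewrite INR_expn logb_pow_base // logb_mul //; [lra | apply: INR_gt0].
apply: le_scaled_bound bound _; first exact: INR_gt0.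
have V_logconcave i : (V i * V i.+2 <= V i.+1 * V i.+1)%R.
  by rewrite -!mult_INR; apply/INR_leq/ball_vol_logconcave.
have := logb_chord q_gt1 (fun i _ => V_gt0 i) (fun i _ => V_logconcave i) AN.
rewrite /V ball_vol0 logb1; lra.
Qed.

Lemma plotkin_local_bound : 0 < N -> (INR rho > (q - 1) / q * INR N)%R ->
  local_bound Q n N rho (logb q (INR rho / (INR rho - (q - 1) / q * INR N))).
Proof.
move=> N_gt0 rho_large A c D AN D_gt0 DA Drho.
set th := ((q - 1) / q)%R in rho_large *.
have th_ge0 : (0 <= th)%R by apply: Rmult_le_pos; [lra | apply/Rlt_le/Rinv_0_lt_compat; lra].
pose P m := (INR rho - th * INR m)%R.
have P_gt0 m : m <= N -> (0 < P m)%R.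
  by move/INR_leq => mN; rewrite /P; nra.
have plotkin : (INR #|D| * P #|A| <= INR rho)%R.
  have := INR_leq (plotkin_bound Drho).
  rewrite !mult_INR !minus_INR; try by apply/leP; lia.
  move=> h; apply: (Rmult_le_reg_l q); first lra.
  rewrite /P /th (_ : q * (INR #|D| * (INR rho - (q - 1) / q * INR #|A|))
    = q * INR #|D| * INR rho - (q - 1) * INR #|A| * INR #|D|)%R; last by field; lra.
  change (INR 1) with 1%R in h; lra.
have bound : (logb q (INR #|D|) <= logb q (INR rho) - logb q (P #|A|))%R.
  have := logb_le q_gt1 (Rmult_lt_0_compat _ _ (INR_gt0 D_gt0) (P_gt0 _ AN)) plotkin.
  by rewrite logb_mul; [lra | apply: INR_gt0 | apply: P_gt0].
apply: le_scaled_bound bound _; first exact: INR_gt0.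
have P_logconcave i : (P i * P i.+2 <= P i.+1 * P i.+1)%R by rewrite /P !S_INR; nra.
have := logb_chord q_gt1 P_gt0 (fun i _ => P_logconcave i) AN.
have rho_gt0 : (0 < INR rho)%R by have := pos_INR N; nra.
rewrite logb_div //; last exact: P_gt0.
rewrite /P Rmult_0_r Rminus_0_r; lra.
Qed.

End LocalBounds.

Lemma local_bound_ge0 (Q : finType) n N rho L (c : {ffun 'I_n -> Q}) (i : 'I_n) :
  0 < N -> local_bound Q n N rho L -> (0 <= L / INR N)%R.
Proof.
move=> N_gt0 bound; have := bound [set i] c [set c]; rewrite !cards1 /= logb1 Rmult_1_r.
apply=> //; last by move=> x y /set1P -> /set1P ->; rewrite eqxx.
by rewrite sub1set inE; apply/forallP => j; rewrite eqxx implybT.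
Qed.

Section Iteration.
Variables (Q : finType) (n r rho d : nat) (C : {set {ffun 'I_n -> Q}}) (L : R).
Hypotheses (Q_gt1 : 1 < #|Q|) (C_lrc : is_LRC C r rho) (C_dist : is_min_dist C d)
  (C_bound : local_bound Q n (r + rho - 1) rho L).
Local Notation N := (r + rho - 1).
Local Notation logq x := (logb (INR #|Q|) (INR x)).
Implicit Types (F R : {set 'I_n}) (c : {ffun 'I_n -> Q}) (S : {set {ffun 'I_n -> Q}}).

Let q_gt1 : (1 < INR #|Q|)%R := INR_gt1 Q_gt1.

Let n_gt0 : 0 < n.
Proof. by have [d_gt0 d_le_n _] := is_min_dist_range C_dist; apply: leq_trans d_le_n. Qed.

Let N_gt0 : 0 < N.
Proof.
have [R [iR RN _]] := C_lrc (Ordinal n_gt0).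
by apply: leq_trans RN; apply/card_gt0P; exists (Ordinal n_gt0).
Qed.

Lemma rate_ge0 : (0 <= L / INR N)%R.
Proof.
have [_ _ /card_gt0P [x _]] := is_min_dist_range C_dist.
exact: (local_bound_ge0 x (Ordinal n_gt0)) N_gt0 C_bound.
Qed.

Lemma peel_repair_group F S R : S \subset C -> 0 < #|S| -> agree_on F S ->
  #|R| <= N -> min_dist_ge (proj_code R C) rho ->
  exists2 S' : {set {ffun 'I_n -> Q}},
    [/\ S' \subset C, 0 < #|S'| & agree_on (F :|: R :\: F) S'] &
    (logq #|S| <= L / INR N * INR #|R :\: F| + logq #|S'|)%R.
Proof.
move=> SC S_gt0 SF RN Rdist; set A := R :\: F.
have [c _] := card_gt0P S_gt0.
have [p pD Sp] := card_le_image_mul_fibre (splice A ^~ c) S_gt0.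
set D := _ @: S in pD Sp; set S' := [set x in S | _] in Sp.
have D_gt0 : 0 < #|D| by apply/card_gt0P; exists p.
have S'_gt0 : 0 < #|S'|.
  by case/imsetP: pD => x xS px; apply/card_gt0P; exists x; rewrite /S' inE xS px eqxx.
exists S'; first split => //.
- by apply: subset_trans SC; apply/subsetP => x /[!inE] /andP [].
- exact: agree_on_fibre.
have D_bound : (logq #|D| <= L / INR N * INR #|A|)%R.
  apply: C_bound => //; first exact: leq_trans (subset_leq_card (subsetDl R F)) RN.
    by apply/subsetP => _ /imsetP [x _ ->]; apply: splice_in_cylinder.
  exact: splice_min_dist SC SF Rdist.
have := INR_leq Sp; rewrite mult_INR => /(logb_le q_gt1 (INR_gt0 S_gt0)).
rewrite logb_mul => [h||]; [|exact: INR_gt0..].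
exact: Rle_trans h (Rplus_le_compat_r _ _ _ D_bound).
Qed.

Lemma logb_card_agree_le F S : S \subset C -> 0 < #|S| -> agree_on F S ->
  (logq #|S| <= L / INR N * INR (n - d + N - #|F|))%R.
Proof.
have [s] := ubnP #|~: F|; elim: s F S => // s IH F S; rewrite ltnS => Fs SC S_gt0 SF.
have cardF := cardsC F; rewrite card_ord in cardF.
have [Fd|Fd] := ltnP (n - d) #|F|.
  have -> : #|S| = 1 by apply/eqP; rewrite eqn_leq S_gt0 (card_le1_agree C_dist.1 SC SF Fd).
  by rewrite logb1; apply: Rmult_le_pos rate_ge0 (pos_INR _).
have [i iF] : exists i, i \in ~: F.
  by apply/card_gt0P; have [] := is_min_dist_range C_dist; lia.
have [R [iR RN Rdist]] := C_lrc i.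
have [S' [S'C S'_gt0 S'F] peel] := peel_repair_group SC S_gt0 SF RN Rdist.
set A := R :\: F in S'F peel.
have cardFA : #|F :|: A| = #|F| + #|A|.
  rewrite cardsU (_ : F :&: A = set0) ?cards0 ?subn0 //.
  by apply/setP => j; rewrite !inE; case: (j \in F); rewrite ?andbF.
have A_gt0 : 0 < #|A| by apply/card_gt0P; exists i; rewrite !inE -in_setC iF.
have AN : #|A| <= N by apply: leq_trans (subset_leq_card (subsetDl R F)) RN.
have shrink : #|~: (F :|: A)| < s by have := cardsC (F :|: A); rewrite card_ord; lia.
have S'_bound := IH _ _ shrink S'C S'_gt0 S'F.
rewrite (_ : n - d + N - #|F| = #|A| + (n - d + N - #|F :|: A|))%nat; last by lia.
rewrite plus_INR Rmult_plus_distr_l.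
exact: Rle_trans peel (Rplus_le_compat_l _ _ _ S'_bound).
Qed.

Lemma code_dim_le_ceil : (code_dim C <= INR ((n - (d - 1) + N - 1) %/ N + 1) * L)%R.
Proof.
have [d_gt0 d_le_n C_gt0] := is_min_dist_range C_dist.
have agree0 : agree_on set0 C by move=> x y _ _ j; rewrite inE.
have := logb_card_agree_le (subxx C) C_gt0 agree0; rewrite cards0 subn0 => bound.
apply: Rle_trans bound _.
have ceil : n - d + N <= N * ((n - (d - 1) + N - 1) %/ N + 1).
  rewrite (_ : n - (d - 1) + N - 1 = n - d + N); last lia.
  by rewrite mulnC addn1 ltnW // ltn_ceil.
apply: Rle_trans (Rmult_le_compat_l _ _ _ rate_ge0 (INR_leq ceil)) _.
rewrite mult_INR; right; field; apply: Rgt_not_eq; exact: INR_gt0.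
Qed.

End Iteration.

Theorem corollary1 (q r rho n d : nat) (Q : finType)
  (C : {set {ffun 'I_n -> Q}}) :
  #|Q| = q -> (2 <= q)%N -> (1 <= r)%N -> (2 <= rho)%N ->
  is_LRC C r rho -> is_min_dist C d ->
  let N := (r + rho - 1)%N in
  (* mu = ceil((n - (d - 1)) / N) + 1 *)
  let mu := ((n - (d - 1) + N - 1) %/ N + 1)%N in
  let k := code_dim C in
  [/\ (k <= INR mu * (INR N - logb (INR q)
          (INR (\sum_(0 <= e < (rho - 1)./2 + 1) 'C(N, e) * expn (q - 1) e))))%R,
      (INR rho > (INR q - 1) / INR q * INR N ->
       k <= INR mu * logb (INR q)
              (INR rho / (INR rho - (INR q - 1) / INR q * INR N)))%R
    & (k <= INR mu * INR r)%R].
Proof.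
move=> <- Q_gt1 r_gt0 rho_gt1 C_lrc C_dist N mu k.
have N_gt0 : 0 < N by rewrite /N; lia.
have dim_le L : local_bound Q n N rho L -> (k <= INR mu * L)%R.
  exact: code_dim_le_ceil Q_gt1 C_lrc C_dist.
split.
- rewrite big_mkord addn1; apply/dim_le/hamming_local_bound => //.
  by rewrite addnn halfK; apply: leq_ltn_trans (leq_subr _ _) _; lia.
- by move=> rho_large; apply/dim_le/plotkin_local_bound.
- by apply/dim_le/singleton_local_bound; lia.
Qed.
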